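(* (1) For all $x,y\in(0,\infty)$, $$\cosh(\sqrt{xy})\le\sqrt{\cosh x\cosh y}\le\cosh\Big(\sqrt{(x^2+y^2)/2}\Big)\le\tfrac12(\cosh x+\cosh y),$$ with equality if and only if $x=y$. (2) For $0<R<6$ and all $x,y\in(0,\sqrt R)$, $$\tfrac12(\cosh x+\cosh y)\le\cosh\Big(\sqrt{R-\sqrt{(R-x^2)(R-y^2)}}\Big),$$ with equality if and only if $x=y$. (3) For all $x,y\in(0,\infty)$, $$\frac{\sinh\sqrt{xy}}{\sqrt{xy}}\le\sqrt{\frac{\sinh x}{x}\cdot\frac{\sinh y}{y}}\le\frac{\sinh\sqrt{\frac12(x^2+y^2)}}{\sqrt{\frac12(x^2+y^2)}}\le\frac12\Big(\frac{\sinh x}{x}+\frac{\sinh y}{y}\Big),$$ with equality if and only if $x=y$. (4) For $0<R<10$ and all $x,y\in(0,\sqrt R)$, writing $s=\sqrt{R-\sqrt{(R-x^2)(R-y^2)}}$, $$\frac12\Big(\frac{\sinh x}{x}+\frac{\sinh y}{y}\Big)\le\frac{\sinh s}{s},$$ with equality if and only if $x=y$. *)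

From Stdlib Require Export Reals.
Open Scope R_scope.

Definition sinhc (x : R) : R := sinh x / x.

Definition Rmean (Rp x y : R) : R :=
  sqrt (Rp - sqrt ((Rp - x ^ 2) * (Rp - y ^ 2))).

(* If h' X = X * k X, then t |-> h (sqrt t) has derivative k (sqrt t) / 2.  Moving
   (x^2, y^2) along a path that keeps the relevant mean fixed and applying the mean value
   theorem: h (qmean) < amean of h when k increases (convexity of h o sqrt),
   h x * h y < h (qmean)^2 when k / h decreases (log-concavity), and amean of h < h (Rmean)
   when (R - X^2) k X decreases.  For h = cosh, k = sinhc; for h = sinhc, k = sinhc_slope.
   The bounds R <= 6 and R <= 10 reduce the last condition to elementary inequalities
   between x, cosh x and sinh x, each proved by differentiating from 0.  The remaining
   inequalities follow from the product formulas for cosh and sinh together with the strict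
   superadditivity of t |-> cosh (sqrt t) - 1. *)

From Stdlib Require Import Reals Lra Psatz.
From Coquelicot Require Import Coquelicot.
Open Scope R_scope.

Lemma lt_of_derive_pos (f df : R -> R) (a b : R) : a < b ->
  (forall c, a <= c <= b -> is_derive f c (df c)) ->
  (forall c, a < c < b -> 0 < df c) -> f a < f b.
Proof.
intros Hab Hder Hpos.
destruct (MVT_cor2 f df a b Hab) as [c [Hmvt Hc]].
{ intros c Hc; apply is_derive_Reals; auto. }
assert (0 < df c) by auto.
nra.
Qed.

Lemma pos_of_derive_pos (f df : R -> R) (x : R) : 0 < x -> f 0 = 0 ->
  (forall c, 0 <= c <= x -> is_derive f c (df c)) ->
  (forall c, 0 < c < x -> 0 < df c) -> 0 < f x.
Proof. intros Hx Hf0 Hder Hpos; rewrite <- Hf0; apply (lt_of_derive_pos f df); auto. Qed.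

Lemma lt_sqrt_of_sqr_lt a b : 0 <= a -> a ^ 2 < b -> a < sqrt b.
Proof. intros Ha Hab; rewrite <- (sqrt_pow2 a) at 1 by lra; apply sqrt_lt_1; nra. Qed.

Lemma sqrt_lt_of_lt_sqr a b : 0 <= a -> 0 <= b -> b < a ^ 2 -> sqrt b < a.
Proof. intros Ha Hb Hab; rewrite <- (sqrt_pow2 a) by lra; apply sqrt_lt_1; nra. Qed.

Lemma sqr_lt_of_lt_sqrt a b : 0 <= a -> a < sqrt b -> a ^ 2 < b.
Proof. intros Ha Hab; apply sqrt_lt_0_alt; rewrite sqrt_pow2; lra. Qed.

Lemma le_with_equality_iff (A B x y : R) :
  (x <> y -> A < B) -> (x = y -> A = B) -> A <= B /\ (A = B <-> x = y).
Proof.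
intros Hlt Heq; destruct (Req_dec x y) as [Hxy | Hxy].
- rewrite (Heq Hxy); split; [lra | tauto].
- specialize (Hlt Hxy); split; [lra | split; intro; [lra | contradiction]].
Qed.

Lemma positive_neq_wlog (P : R -> R -> Prop) :
  (forall x y, P x y -> P y x) -> (forall x y, 0 < y < x -> P x y) ->
  forall x y, 0 < x -> 0 < y -> x <> y -> P x y.
Proof.
intros Hsym Hord x y Hx Hy Hxy.
destruct (Rlt_or_le x y); [apply Hsym, Hord | apply Hord]; lra.
Qed.

Lemma qmean_diag x : 0 < x -> sqrt ((x ^ 2 + x ^ 2) / 2) = x.
Proof. intros Hx; replace ((x ^ 2 + x ^ 2) / 2) with (x ^ 2) by field; apply sqrt_pow2; lra. Qed.

Lemma qmean_comm x y : sqrt ((x ^ 2 + y ^ 2) / 2) = sqrt ((y ^ 2 + x ^ 2) / 2).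
Proof. now rewrite Rplus_comm. Qed.

Lemma Rmean_diag Rp x : 0 < x < sqrt Rp -> Rmean Rp x x = x.
Proof.
intros [Hx HxR]; pose proof (sqr_lt_of_lt_sqrt x Rp ltac:(lra) HxR).
unfold Rmean; rewrite sqrt_square by lra.
replace (Rp - (Rp - x ^ 2)) with (x ^ 2) by ring; apply sqrt_pow2; lra.
Qed.

Lemma Rmean_comm Rp x y : Rmean Rp x y = Rmean Rp y x.
Proof. unfold Rmean; now rewrite (Rmult_comm (Rp - x ^ 2)). Qed.

Section MeanComparisons.

Variables h k : R -> R.
Hypothesis h_deriv : forall X, 0 < X -> is_derive h X (X * k X).

Lemma is_derive_comp_sqrt (u : R -> R) (t du : R) : is_derive u t du -> 0 < u t ->
  is_derive (fun t => h (sqrt (u t))) t (du * k (sqrt (u t)) / 2).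
Proof.
intros Hu Hpos.
assert (Hs : 0 < sqrt (u t)) by (apply sqrt_lt_R0; auto).
replace (du * k (sqrt (u t)) / 2)
  with (scal (du / (2 * sqrt (u t))) (sqrt (u t) * k (sqrt (u t))))
  by (unfold scal; simpl; unfold mult; simpl; field; lra).
apply (is_derive_comp h (fun t => sqrt (u t))); [now apply h_deriv|].
now apply is_derive_sqrt.
Qed.


Lemma qmean_lt_amean :
  (forall a b, 0 < a < b -> k a < k b) ->
  forall x y, 0 < x -> 0 < y -> x <> y ->
  h (sqrt ((x ^ 2 + y ^ 2) / 2)) < (h x + h y) / 2.
Proof.
intros Hk; apply positive_neq_wlog.
{ intros x y Hxy; rewrite qmean_comm; lra. }
intros x y [Hy Hyx].
set (M := (x ^ 2 + y ^ 2) / 2); set (d := (x ^ 2 - y ^ 2) / 2).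
pose (f := fun e => h (sqrt (M + e)) + h (sqrt (M - e))).
assert (Hf : f 0 < f d).
{ apply (lt_of_derive_pos f
    (fun e => 1 * k (sqrt (M + e)) / 2 + (-1) * k (sqrt (M - e)) / 2));
    [unfold d; nra | |].
  - intros e He; apply @is_derive_plus.
    + apply (is_derive_comp_sqrt (fun e => M + e)); [auto_derive; auto | unfold M; nra].
    + apply (is_derive_comp_sqrt (fun e => M - e)); [auto_derive; auto | unfold M, d in *; nra].
  - intros e He.
    assert (k (sqrt (M - e)) < k (sqrt (M + e))); [|lra].
    apply Hk; split; [apply sqrt_lt_R0 | apply sqrt_lt_1]; unfold M, d in *; nra. }
unfold f in Hf.
replace (M + d) with (x ^ 2) in Hf by (unfold M, d; field).
replace (M - d) with (y ^ 2) in Hf by (unfold M, d; field).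
rewrite Rplus_0_r, Rminus_0_r, !sqrt_pow2 in Hf by lra; lra.
Qed.

Lemma gmean_lt_qmean :
  (forall X, 0 < X -> 0 < h X) ->
  (forall a b, 0 < a < b -> k b / h b < k a / h a) ->
  forall x y, 0 < x -> 0 < y -> x <> y ->
  h x * h y < h (sqrt ((x ^ 2 + y ^ 2) / 2)) ^ 2.
Proof.
intros Hpos Hk; apply positive_neq_wlog.
{ intros x y Hxy; rewrite qmean_comm; lra. }
intros x y [Hy Hyx].
set (M := (x ^ 2 + y ^ 2) / 2); set (d := (x ^ 2 - y ^ 2) / 2).
pose (f := fun e => - (h (sqrt (M + e)) * h (sqrt (M - e)))).
assert (Hf : f 0 < f d).
{ apply (lt_of_derive_pos f
    (fun e => - (1 * k (sqrt (M + e)) / 2 * h (sqrt (M - e))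
                 + h (sqrt (M + e)) * ((-1) * k (sqrt (M - e)) / 2))));
    [unfold d; nra | |].
  - intros e He; apply @is_derive_opp.
    apply (is_derive_mult (fun e => h (sqrt (M + e))) (fun e => h (sqrt (M - e))));
      [| | intros; apply Rmult_comm].
    + apply (is_derive_comp_sqrt (fun e => M + e)); [auto_derive; auto | unfold M; nra].
    + apply (is_derive_comp_sqrt (fun e => M - e)); [auto_derive; auto | unfold M, d in *; nra].
  - intros e He.
    set (a := sqrt (M - e)); set (b := sqrt (M + e)).
    assert (Ha : 0 < a) by (apply sqrt_lt_R0; unfold M, d in *; nra).
    assert (Hab : a < b) by (apply sqrt_lt_1; unfold M, d in *; nra).
    assert (Hha : 0 < h a) by auto.
    assert (Hhb : 0 < h b) by (apply Hpos; lra).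
    pose proof (Hk a b (conj Ha Hab)) as Hratio.
    apply (Rmult_lt_compat_r (h a * h b)) in Hratio; [|nra].
    replace (k b / h b * (h a * h b)) with (k b * h a) in Hratio by (field; lra).
    replace (k a / h a * (h a * h b)) with (k a * h b) in Hratio by (field; lra).
    lra. }
unfold f in Hf.
replace (M + d) with (x ^ 2) in Hf by (unfold M, d; field).
replace (M - d) with (y ^ 2) in Hf by (unfold M, d; field).
rewrite Rplus_0_r, Rminus_0_r, !sqrt_pow2 in Hf by lra; lra.
Qed.

Variable Rp : R.
Hypothesis weighted_k_lt :
  forall a b, 0 < a < b -> b ^ 2 < Rp -> (Rp - b ^ 2) * k b < (Rp - a ^ 2) * k a.

(* Along [p], the product [(Rp - a ^ 2) * (Rp - b ^ 2)] of the pair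
   [a = sqrt (Rp - p)], [b = sqrt (Rp - g ^ 2 / p)] stays equal to [g ^ 2]. *)
Lemma Rmean_path_lt (g u : R) : 0 < g < u -> u < Rp ->
  h (sqrt (Rp - u)) + h (sqrt (Rp - g ^ 2 / u)) < 2 * h (sqrt (Rp - g)).
Proof.
intros [Hg Hgu] HuR.
assert (Hcomp : forall p, g <= p -> g ^ 2 / p <= p).
{ intros p Hp; apply Rmult_le_reg_r with p; [lra|].
  replace (g ^ 2 / p * p) with (g ^ 2) by (field; lra); nra. }
pose (f := fun p => - (h (sqrt (Rp - p)) + h (sqrt (Rp - g ^ 2 / p)))).
assert (Hf : f g < f u).
{ apply (lt_of_derive_pos f (fun p => - ((-1) * k (sqrt (Rp - p)) / 2
                                       + (g ^ 2 / p ^ 2) * k (sqrt (Rp - g ^ 2 / p)) / 2)));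
    [lra | |].
  - intros p Hp; apply @is_derive_opp, @is_derive_plus.
    + apply (is_derive_comp_sqrt (fun p => Rp - p)); [auto_derive; auto | lra].
    + apply (is_derive_comp_sqrt (fun p => Rp - g ^ 2 / p)).
      * auto_derive; [lra | field; lra].
      * specialize (Hcomp p (proj1 Hp)); lra.
  - intros p Hp.
    assert (Hlt : g ^ 2 / p < p) by (apply Rmult_lt_reg_r with p;
      [lra | replace (g ^ 2 / p * p) with (g ^ 2) by (field; lra); nra]).
    assert (Hq : 0 < g ^ 2 / p) by (apply Rdiv_lt_0_compat; nra).
    set (a := sqrt (Rp - p)); set (b := sqrt (Rp - g ^ 2 / p)).
    assert (Ha2 : a ^ 2 = Rp - p) by (apply pow2_sqrt; lra).
    assert (Hb2 : b ^ 2 = Rp - g ^ 2 / p) by (apply pow2_sqrt; lra).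
    assert (Ha : 0 < a) by (apply sqrt_lt_R0; lra).
    assert (Hab : a < b) by (apply sqrt_lt_1; lra).
    pose proof (weighted_k_lt a b (conj Ha Hab) ltac:(lra)) as Hkab.
    rewrite Ha2, Hb2 in Hkab.
    replace (Rp - (Rp - p)) with p in Hkab by ring.
    replace (Rp - (Rp - g ^ 2 / p)) with (g ^ 2 / p) in Hkab by ring.
    assert (g ^ 2 / p ^ 2 * k b < k a); [|lra].
    apply Rmult_lt_reg_r with p; [lra|].
    replace (g ^ 2 / p ^ 2 * k b * p) with (g ^ 2 / p * k b) by (field; lra); lra. }
unfold f in Hf; replace (g ^ 2 / g) with g in Hf by (field; lra); lra.
Qed.

Lemma amean_lt_Rmean x y : 0 < x -> 0 < y -> x <> y -> x < sqrt Rp -> y < sqrt Rp ->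
  (h x + h y) / 2 < h (Rmean Rp x y).
Proof.
revert x y.
apply (positive_neq_wlog (fun x y =>
  x < sqrt Rp -> y < sqrt Rp -> (h x + h y) / 2 < h (Rmean Rp x y))).
{ intros x y Hxy Hy Hx; rewrite Rmean_comm; specialize (Hxy Hx Hy); lra. }
intros x y [Hy Hyx] HxR _.
pose proof (sqr_lt_of_lt_sqrt x Rp ltac:(lra) HxR) as Hx2.
set (u := Rp - y ^ 2); set (v := Rp - x ^ 2).
assert (Hv : 0 < v) by (unfold v; lra).
assert (HuR : u < Rp) by (unfold u; nra).
assert (Hvu : v < u) by (unfold u, v; nra).
set (g := sqrt (u * v)).
assert (Hg2 : g ^ 2 = u * v) by (apply pow2_sqrt; nra).
assert (Hg : 0 < g) by (apply sqrt_lt_R0; nra).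
pose proof (Rmean_path_lt g u ltac:(nra) HuR) as Hpath.
replace (g ^ 2 / u) with v in Hpath by (rewrite Hg2; field; lra).
unfold u, v in Hpath.
replace (Rp - (Rp - y ^ 2)) with (y ^ 2) in Hpath by ring.
replace (Rp - (Rp - x ^ 2)) with (x ^ 2) in Hpath by ring.
rewrite !sqrt_pow2 in Hpath by lra.
unfold Rmean; rewrite Rmult_comm; fold u v g; lra.
Qed.

End MeanComparisons.

Ltac exp_field :=
  unfold cosh, sinh, Rminus;
  repeat rewrite ?Ropp_plus_distr, ?Ropp_involutive, ?exp_plus, ?exp_Ropp;
  field; repeat split; apply Rgt_not_eq, exp_pos.

Ltac derive_hyperbolic :=
  unfold cosh, sinh; auto_derive; try exact I; try (unfold cosh, sinh; field).

Lemma cosh_pos x : 0 < cosh x.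
Proof. unfold cosh; generalize (exp_pos x) (exp_pos (- x)); lra. Qed.

Lemma sinh_pos x : 0 < x -> 0 < sinh x.
Proof. intros Hx; rewrite <- sinh_0; now apply sinh_lt. Qed.

Lemma cosh_opp x : cosh (- x) = cosh x.
Proof. exp_field. Qed.

Lemma cosh_sqr_sub_sinh_sqr x : cosh x ^ 2 - sinh x ^ 2 = 1.
Proof. exp_field. Qed.

Lemma cosh_ge_1 x : 1 <= cosh x.
Proof. generalize (cosh_sqr_sub_sinh_sqr x) (cosh_pos x); nra. Qed.

Lemma cosh_double x : 2 * cosh x ^ 2 = cosh (2 * x) + 1.
Proof. replace (2 * x) with (x + x) by ring; exp_field. Qed.

Lemma sinh_double x : 2 * sinh x ^ 2 = cosh (2 * x) - 1.
Proof. replace (2 * x) with (x + x) by ring; exp_field. Qed.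

Lemma cosh_mul x y : 2 * cosh x * cosh y = cosh (x + y) + cosh (x - y).
Proof. exp_field. Qed.

Lemma sinh_mul x y : 2 * sinh x * sinh y = cosh (x + y) - cosh (x - y).
Proof. exp_field. Qed.

Lemma is_derive_cosh x : is_derive cosh x (sinh x).
Proof. apply is_derive_Reals, derivable_pt_lim_cosh. Qed.

Lemma cosh_lt a b : 0 <= a < b -> cosh a < cosh b.
Proof.
intros [Ha Hab]; apply (lt_of_derive_pos cosh sinh); auto.
- intros; apply is_derive_cosh.
- intros c Hc; apply sinh_pos; lra.
Qed.

Lemma mul_cosh_sub_sinh_pos x : 0 < x -> 0 < x * cosh x - sinh x.
Proof.
intros Hx; apply (pos_of_derive_pos (fun x => x * cosh x - sinh x) (fun x => x * sinh x)); auto.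
- rewrite sinh_0; ring.
- intros; derive_hyperbolic.
- intros c Hc; generalize (sinh_pos c); nra.
Qed.

Lemma sinhc_pos x : 0 < x -> 0 < sinhc x.
Proof. intros Hx; apply Rdiv_lt_0_compat; auto; now apply sinh_pos. Qed.

Lemma is_derive_cosh_sinhc x : 0 < x -> is_derive cosh x (x * sinhc x).
Proof.
intros Hx; replace (x * sinhc x) with (sinh x) by (unfold sinhc; field; lra).
apply is_derive_cosh.
Qed.

Lemma sinhc_lt a b : 0 < a < b -> sinhc a < sinhc b.
Proof.
intros [Ha Hab]; apply (lt_of_derive_pos sinhc (fun x => (x * cosh x - sinh x) / x ^ 2)); auto.
- intros c Hc; unfold sinhc; derive_hyperbolic; lra.
- intros c Hc; apply Rdiv_lt_0_compat; [apply mul_cosh_sub_sinh_pos; lra | nra].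
Qed.

Definition sinhc_slope (x : R) : R := (x * cosh x - sinh x) / x ^ 3.

Lemma is_derive_sinhc x : 0 < x -> is_derive sinhc x (x * sinhc_slope x).
Proof. intros Hx; unfold sinhc, sinhc_slope; derive_hyperbolic; lra. Qed.

Lemma mul_cosh_sub_sinh_lt x : 0 < x -> 3 * (x * cosh x - sinh x) < x ^ 2 * sinh x.
Proof.
intros Hx.
enough (0 < x ^ 2 * sinh x - 3 * (x * cosh x - sinh x)) by lra.
apply (pos_of_derive_pos (fun x => x ^ 2 * sinh x - 3 * (x * cosh x - sinh x))
  (fun x => x * (x * cosh x - sinh x))); auto.
- rewrite sinh_0; ring.
- intros; derive_hyperbolic.
- intros c Hc; generalize (mul_cosh_sub_sinh_pos c); intros; apply Rmult_lt_0_compat; lra.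
Qed.

Lemma sinhc_slope_lt a b : 0 < a < b -> sinhc_slope a < sinhc_slope b.
Proof.
intros [Ha Hab].
apply (lt_of_derive_pos sinhc_slope
  (fun x => (x ^ 2 * sinh x - 3 * (x * cosh x - sinh x)) / x ^ 4)); auto.
- intros c Hc; unfold sinhc_slope; derive_hyperbolic;
    repeat apply Rmult_integral_contrapositive_currified; lra.
- intros c Hc; apply Rdiv_lt_0_compat; [generalize (mul_cosh_sub_sinh_lt c) | apply pow_lt]; lra.
Qed.

Lemma cosh_sinh_ineq_6 x : 0 < x ->
  (6 - x ^ 2) * (x * cosh x - sinh x) < 2 * x ^ 2 * sinh x.
Proof.
intros Hx.
enough (0 < x ^ 2 * sinh x + x ^ 3 * cosh x + 6 * sinh x - 6 * x * cosh x) by nra.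
apply (pos_of_derive_pos (fun x => x ^ 2 * sinh x + x ^ 3 * cosh x + 6 * sinh x - 6 * x * cosh x)
  (fun x => x * (x ^ 2 * sinh x + 4 * (x * cosh x - sinh x)))); auto.
- rewrite sinh_0; ring.
- intros; derive_hyperbolic.
- intros c Hc; generalize (mul_cosh_sub_sinh_pos c) (sinh_pos c); intros.
  apply Rmult_lt_0_compat; nra.
Qed.

Lemma cosh_sinh_ineq_10 x : 0 < x ->
  (10 - x ^ 2) * (x ^ 2 * sinh x - 3 * (x * cosh x - sinh x))
  < 2 * x ^ 2 * (x * cosh x - sinh x).
Proof.
intros Hx.
enough (0 < x ^ 4 * sinh x - x ^ 3 * cosh x - 9 * x ^ 2 * sinh x + 30 * x * cosh x - 30 * sinh x)
  by nra.
assert (Hder : forall c, 0 < c ->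
  0 < c ^ 3 * cosh c + 3 * c ^ 2 * sinh c - 12 * c * cosh c + 12 * sinh c).
{ intros c Hc.
  apply (pos_of_derive_pos
    (fun x => x ^ 3 * cosh x + 3 * x ^ 2 * sinh x - 12 * x * cosh x + 12 * sinh x)
    (fun x => x * (x ^ 2 * sinh x + 6 * (x * cosh x - sinh x)))); auto.
  - rewrite sinh_0; ring.
  - intros; derive_hyperbolic.
  - intros d Hd; generalize (mul_cosh_sub_sinh_pos d) (sinh_pos d); intros.
    apply Rmult_lt_0_compat; nra. }
apply (pos_of_derive_pos
  (fun x => x ^ 4 * sinh x - x ^ 3 * cosh x - 9 * x ^ 2 * sinh x + 30 * x * cosh x - 30 * sinh x)
  (fun x => x * (x ^ 3 * cosh x + 3 * x ^ 2 * sinh x - 12 * x * cosh x + 12 * sinh x))); auto.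
- rewrite sinh_0; ring.
- intros; derive_hyperbolic.
- intros c Hc; apply Rmult_lt_0_compat; [lra | apply Hder; lra].
Qed.

Lemma sinh_sqr_lt x : 0 < x -> 2 * sinh x ^ 2 < x ^ 2 + x * sinh x * cosh x.
Proof.
intros Hx.
enough (0 < x ^ 2 + x * cosh x * sinh x - 2 * sinh x ^ 2) by nra.
assert (Hder : forall c, 0 < c ->
  0 < 2 * c + c * (sinh c ^ 2 + cosh c ^ 2) - 3 * sinh c * cosh c).
{ intros c Hc.
  apply (pos_of_derive_pos (fun x => 2 * x + x * (sinh x ^ 2 + cosh x ^ 2) - 3 * sinh x * cosh x)
    (fun x => 2 + 4 * x * sinh x * cosh x - 2 * (sinh x ^ 2 + cosh x ^ 2))); auto.
  - rewrite sinh_0, cosh_0; ring.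
  - intros; derive_hyperbolic.
  - intros d Hd; generalize (mul_cosh_sub_sinh_pos d) (sinh_pos d) (cosh_sqr_sub_sinh_sqr d).
    intros; nra. }
apply (pos_of_derive_pos (fun x => x ^ 2 + x * cosh x * sinh x - 2 * sinh x ^ 2)
  (fun x => 2 * x + x * (sinh x ^ 2 + cosh x ^ 2) - 3 * sinh x * cosh x)); auto.
- rewrite sinh_0; ring.
- intros; derive_hyperbolic.
- intros c Hc; apply Hder; lra.
Qed.

Lemma sinhc_weighted_lt Rp a b : Rp <= 6 -> 0 < a < b -> b ^ 2 < Rp ->
  (Rp - b ^ 2) * sinhc b < (Rp - a ^ 2) * sinhc a.
Proof.
intros HR [Ha Hab] Hb.
apply Ropp_lt_cancel.
apply (lt_of_derive_pos (fun x => - ((Rp - x ^ 2) * sinhc x))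
  (fun x => - (- 2 * x * sinhc x + (Rp - x ^ 2) * ((x * cosh x - sinh x) / x ^ 2)))); auto.
- intros c Hc; unfold sinhc; derive_hyperbolic; lra.
- intros c Hc.
  generalize (cosh_sinh_ineq_6 c) (mul_cosh_sub_sinh_pos c); intros.
  assert (Hsinh : c * sinhc c = sinh c) by (unfold sinhc; field; lra).
  assert ((Rp - c ^ 2) * ((c * cosh c - sinh c) / c ^ 2) < 2 * sinh c); [|nra].
  apply Rmult_lt_reg_r with (c ^ 2); [nra|].
  replace ((Rp - c ^ 2) * ((c * cosh c - sinh c) / c ^ 2) * c ^ 2)
    with ((Rp - c ^ 2) * (c * cosh c - sinh c)) by (field; lra).
  nra.
Qed.

Lemma sinhc_slope_weighted_lt Rp a b : Rp <= 10 -> 0 < a < b -> b ^ 2 < Rp ->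
  (Rp - b ^ 2) * sinhc_slope b < (Rp - a ^ 2) * sinhc_slope a.
Proof.
intros HR [Ha Hab] Hb.
apply Ropp_lt_cancel.
apply (lt_of_derive_pos (fun x => - ((Rp - x ^ 2) * sinhc_slope x))
  (fun x => - (- 2 * x * sinhc_slope x
     + (Rp - x ^ 2) * ((x ^ 2 * sinh x - 3 * (x * cosh x - sinh x)) / x ^ 4)))); auto.
- intros c Hc; unfold sinhc_slope; derive_hyperbolic;
    repeat apply Rmult_integral_contrapositive_currified; lra.
- intros c Hc.
  generalize (cosh_sinh_ineq_10 c) (mul_cosh_sub_sinh_lt c); intros.
  assert (Hslope : c * sinhc_slope c = (c * cosh c - sinh c) / c ^ 2)
    by (unfold sinhc_slope; field; lra).
  assert ((Rp - c ^ 2) * ((c ^ 2 * sinh c - 3 * (c * cosh c - sinh c)) / c ^ 4)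
          < 2 * ((c * cosh c - sinh c) / c ^ 2)); [|nra].
  apply Rmult_lt_reg_r with (c ^ 4); [apply pow_lt; lra|].
  replace ((Rp - c ^ 2) * ((c ^ 2 * sinh c - 3 * (c * cosh c - sinh c)) / c ^ 4) * c ^ 4)
    with ((Rp - c ^ 2) * (c ^ 2 * sinh c - 3 * (c * cosh c - sinh c))) by (field; lra).
  replace (2 * ((c * cosh c - sinh c) / c ^ 2) * c ^ 4)
    with (2 * c ^ 2 * (c * cosh c - sinh c)) by (field; lra).
  nra.
Qed.

Lemma sinhc_slope_div_sinhc_lt a b : 0 < a < b ->
  sinhc_slope b / sinhc b < sinhc_slope a / sinhc a.
Proof.
intros [Ha Hab].
assert (Hratio : forall x, 0 < x ->
  sinhc_slope x / sinhc x = (x * cosh x - sinh x) / (x ^ 2 * sinh x)).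
{ intros x Hx; unfold sinhc_slope, sinhc; generalize (sinh_pos x Hx); intros; field; lra. }
rewrite !Hratio by lra; apply Ropp_lt_cancel.
apply (lt_of_derive_pos (fun x => - ((x * cosh x - sinh x) / (x ^ 2 * sinh x)))
  (fun x => (x ^ 2 + x * sinh x * cosh x - 2 * sinh x ^ 2) / (x ^ 3 * sinh x ^ 2))); auto.
- intros c Hc.
  assert (Hs : 0 < exp c - exp (- c)) by (generalize (sinh_pos c); unfold sinh; lra).
  derive_hyperbolic.
  + repeat apply Rmult_integral_contrapositive_currified; lra.
  + rewrite exp_Ropp in *; generalize (exp_pos c); intros.
    assert (Hinv : exp c * / exp c = 1) by (field; lra).
    field; repeat split; nra.
- intros c Hc; generalize (sinh_pos c) (sinh_sqr_lt c); intros.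
  apply Rdiv_lt_0_compat; [nra|].
  apply Rmult_lt_0_compat; apply pow_lt; auto; lra.
Qed.

Lemma cosh_sqrt_superadditive a b : 0 < a -> b <> 0 ->
  cosh a + cosh b < cosh (sqrt (a ^ 2 + b ^ 2)) + 1.
Proof.
intros Ha Hb.
assert (Hpos : forall t, 0 < t -> cosh a + cosh t < cosh (sqrt (a ^ 2 + t ^ 2)) + 1).
{ intros t Ht.
  pose (f := fun t => cosh (sqrt (a ^ 2 + t ^ 2)) - cosh t).
  assert (Hf : f 0 < f t).
  { apply (lt_of_derive_pos f
      (fun t => 2 * t * sinhc (sqrt (a ^ 2 + t ^ 2)) / 2 - sinh t)); auto.
    - intros c Hc; apply @is_derive_minus; [|apply is_derive_cosh].
      apply (is_derive_comp_sqrt cosh sinhc is_derive_cosh_sinhc (fun t => a ^ 2 + t ^ 2));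
        [auto_derive; auto; ring | nra].
    - intros c Hc.
      assert (c < sqrt (a ^ 2 + c ^ 2)) by (apply lt_sqrt_of_sqr_lt; nra).
      assert (sinhc c < sinhc (sqrt (a ^ 2 + c ^ 2))) by (apply sinhc_lt; lra).
      assert (sinh c = c * sinhc c) by (unfold sinhc; field; lra).
      nra. }
  unfold f in Hf.
  replace (a ^ 2 + 0 ^ 2) with (a ^ 2) in Hf by ring.
  rewrite sqrt_pow2, cosh_0 in Hf by lra; lra. }
destruct (Rlt_or_le 0 b); [now apply Hpos|].
rewrite <- (cosh_opp b); replace (b ^ 2) with ((- b) ^ 2) by ring; apply Hpos; lra.
Qed.

Lemma cosh_gmean_le x y : 0 < x -> 0 < y ->
  cosh (sqrt (x * y)) <= sqrt (cosh x * cosh y) /\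
  (cosh (sqrt (x * y)) = sqrt (cosh x * cosh y) <-> x = y).
Proof.
intros Hx Hy; apply le_with_equality_iff.
- intros Hxy; set (g := sqrt (x * y)).
  assert (Hg2 : g ^ 2 = x * y) by (apply pow2_sqrt; nra).
  assert (Hg : 0 < g) by (apply sqrt_lt_R0; nra).
  assert (Hd : 0 < (x - y) ^ 2) by (rewrite <- Rsqr_pow2; apply Rlt_0_sqr; lra).
  assert (cosh (2 * g) < cosh (x + y)) by (apply cosh_lt; nra).
  generalize (cosh_double g) (cosh_mul x y) (cosh_ge_1 (x - y)); intros.
  apply lt_sqrt_of_sqr_lt; [left; apply cosh_pos | nra].
- intros <-; rewrite !sqrt_square; auto; [left; apply cosh_pos | lra].
Qed.

Lemma gmean_cosh_le_cosh_qmean x y : 0 < x -> 0 < y ->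
  sqrt (cosh x * cosh y) <= cosh (sqrt ((x ^ 2 + y ^ 2) / 2)) /\
  (sqrt (cosh x * cosh y) = cosh (sqrt ((x ^ 2 + y ^ 2) / 2)) <-> x = y).
Proof.
intros Hx Hy; apply le_with_equality_iff.
- intros Hxy; set (m := sqrt ((x ^ 2 + y ^ 2) / 2)).
  assert (Hm2 : m ^ 2 = (x ^ 2 + y ^ 2) / 2) by (apply pow2_sqrt; nra).
  assert (Hm : 0 < m) by (apply sqrt_lt_R0; nra).
  pose proof (cosh_sqrt_superadditive (x + y) (x - y)) as Hsup.
  replace ((x + y) ^ 2 + (x - y) ^ 2) with ((2 * m) ^ 2) in Hsup by nra.
  rewrite sqrt_pow2 in Hsup by lra.
  specialize (Hsup ltac:(lra) ltac:(lra)).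
  generalize (cosh_double m) (cosh_mul x y) (cosh_pos x) (cosh_pos y); intros.
  apply sqrt_lt_of_lt_sqr; [left; apply cosh_pos | nra | nra].
- intros <-; rewrite qmean_diag, sqrt_square; auto; left; apply cosh_pos.
Qed.

Lemma cosh_qmean_le_amean x y : 0 < x -> 0 < y ->
  cosh (sqrt ((x ^ 2 + y ^ 2) / 2)) <= (cosh x + cosh y) / 2 /\
  (cosh (sqrt ((x ^ 2 + y ^ 2) / 2)) = (cosh x + cosh y) / 2 <-> x = y).
Proof.
intros Hx Hy; apply le_with_equality_iff.
- apply (qmean_lt_amean cosh sinhc is_derive_cosh_sinhc sinhc_lt); auto.
- intros <-; rewrite qmean_diag; auto; field.
Qed.

Lemma amean_cosh_le_cosh_Rmean Rp x y : Rp <= 6 ->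
  0 < x < sqrt Rp -> 0 < y < sqrt Rp ->
  (cosh x + cosh y) / 2 <= cosh (Rmean Rp x y) /\
  ((cosh x + cosh y) / 2 = cosh (Rmean Rp x y) <-> x = y).
Proof.
intros HR Hx Hy; apply le_with_equality_iff.
- intros Hxy; apply (amean_lt_Rmean cosh sinhc is_derive_cosh_sinhc Rp); try tauto.
  intros a b; apply sinhc_weighted_lt; auto.
- intros <-; rewrite Rmean_diag; auto; field.
Qed.

Lemma sinhc_gmean_le x y : 0 < x -> 0 < y ->
  sinhc (sqrt (x * y)) <= sqrt (sinhc x * sinhc y) /\
  (sinhc (sqrt (x * y)) = sqrt (sinhc x * sinhc y) <-> x = y).
Proof.
intros Hx Hy; apply le_with_equality_iff.
- intros Hxy; set (g := sqrt (x * y)).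
  assert (Hg2 : g ^ 2 = x * y) by (apply pow2_sqrt; nra).
  assert (Hg : 0 < g) by (apply sqrt_lt_R0; nra).
  pose proof (cosh_sqrt_superadditive (2 * g) (x - y)) as Hsup.
  replace ((2 * g) ^ 2 + (x - y) ^ 2) with ((x + y) ^ 2) in Hsup by nra.
  rewrite sqrt_pow2 in Hsup by lra.
  specialize (Hsup ltac:(lra) ltac:(lra)).
  assert (Hsinh : sinh g ^ 2 < sinh x * sinh y)
    by (generalize (sinh_double g) (sinh_mul x y); intros; nra).
  apply lt_sqrt_of_sqr_lt; [left; now apply sinhc_pos|].
  unfold sinhc.
  replace ((sinh g / g) ^ 2) with (sinh g ^ 2 / (x * y)) by (rewrite <- Hg2; field; lra).
  replace (sinh x / x * (sinh y / y)) with (sinh x * sinh y / (x * y)) by (field; lra).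
  apply Rmult_lt_compat_r; auto; apply Rinv_0_lt_compat; nra.
- intros <-; rewrite !sqrt_square; auto; [left; now apply sinhc_pos | lra].
Qed.

Lemma gmean_sinhc_le_sinhc_qmean x y : 0 < x -> 0 < y ->
  sqrt (sinhc x * sinhc y) <= sinhc (sqrt ((x ^ 2 + y ^ 2) / 2)) /\
  (sqrt (sinhc x * sinhc y) = sinhc (sqrt ((x ^ 2 + y ^ 2) / 2)) <-> x = y).
Proof.
intros Hx Hy; apply le_with_equality_iff.
- intros Hxy.
  assert (Hm : 0 < sqrt ((x ^ 2 + y ^ 2) / 2)) by (apply sqrt_lt_R0; nra).
  apply sqrt_lt_of_lt_sqr; [left; now apply sinhc_pos | |].
  + generalize (sinhc_pos x Hx) (sinhc_pos y Hy); nra.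
  + apply (gmean_lt_qmean sinhc sinhc_slope is_derive_sinhc sinhc_pos
      sinhc_slope_div_sinhc_lt); auto.
- intros <-; rewrite qmean_diag, sqrt_square; auto; left; now apply sinhc_pos.
Qed.

Lemma sinhc_qmean_le_amean x y : 0 < x -> 0 < y ->
  sinhc (sqrt ((x ^ 2 + y ^ 2) / 2)) <= (sinhc x + sinhc y) / 2 /\
  (sinhc (sqrt ((x ^ 2 + y ^ 2) / 2)) = (sinhc x + sinhc y) / 2 <-> x = y).
Proof.
intros Hx Hy; apply le_with_equality_iff.
- apply (qmean_lt_amean sinhc sinhc_slope is_derive_sinhc sinhc_slope_lt); auto.
- intros <-; rewrite qmean_diag; auto; field.
Qed.

Lemma amean_sinhc_le_sinhc_Rmean Rp x y : Rp <= 10 ->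
  0 < x < sqrt Rp -> 0 < y < sqrt Rp ->
  (sinhc x + sinhc y) / 2 <= sinhc (Rmean Rp x y) /\
  ((sinhc x + sinhc y) / 2 = sinhc (Rmean Rp x y) <-> x = y).
Proof.
intros HR Hx Hy; apply le_with_equality_iff.
- intros Hxy; apply (amean_lt_Rmean sinhc sinhc_slope is_derive_sinhc Rp); try tauto.
  intros a b; apply sinhc_slope_weighted_lt; auto.
- intros <-; rewrite Rmean_diag; auto; field.
Qed.
Theorem corollary3p8 :
  (* (1) *)
  (forall x y : R, 0 < x -> 0 < y ->
     cosh (sqrt (x * y)) <= sqrt (cosh x * cosh y) /\
     sqrt (cosh x * cosh y) <= cosh (sqrt ((x ^ 2 + y ^ 2) / 2)) /\
     cosh (sqrt ((x ^ 2 + y ^ 2) / 2)) <= (cosh x + cosh y) / 2 /\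
     (cosh (sqrt (x * y)) = sqrt (cosh x * cosh y) <-> x = y) /\
     (sqrt (cosh x * cosh y) = cosh (sqrt ((x ^ 2 + y ^ 2) / 2)) <-> x = y) /\
     (cosh (sqrt ((x ^ 2 + y ^ 2) / 2)) = (cosh x + cosh y) / 2 <-> x = y)) /\
  (* (2) *)
  (forall Rp x y : R, 0 < Rp < 6 ->
     0 < x < sqrt Rp -> 0 < y < sqrt Rp ->
     (cosh x + cosh y) / 2 <= cosh (Rmean Rp x y) /\
     ((cosh x + cosh y) / 2 = cosh (Rmean Rp x y) <-> x = y)) /\
  (* (3) *)
  (forall x y : R, 0 < x -> 0 < y ->
     sinhc (sqrt (x * y)) <= sqrt (sinhc x * sinhc y) /\
     sqrt (sinhc x * sinhc y) <= sinhc (sqrt ((x ^ 2 + y ^ 2) / 2)) /\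
     sinhc (sqrt ((x ^ 2 + y ^ 2) / 2)) <= (sinhc x + sinhc y) / 2 /\
     (sinhc (sqrt (x * y)) = sqrt (sinhc x * sinhc y) <-> x = y) /\
     (sqrt (sinhc x * sinhc y) = sinhc (sqrt ((x ^ 2 + y ^ 2) / 2)) <-> x = y) /\
     (sinhc (sqrt ((x ^ 2 + y ^ 2) / 2)) = (sinhc x + sinhc y) / 2 <-> x = y)) /\
  (* (4) *)
  (forall Rp x y : R, 0 < Rp < 10 ->
     0 < x < sqrt Rp -> 0 < y < sqrt Rp ->
     (sinhc x + sinhc y) / 2 <= sinhc (Rmean Rp x y) /\
     ((sinhc x + sinhc y) / 2 = sinhc (Rmean Rp x y) <-> x = y)).
Proof.
split; [|split; [|split]].
- intros x y Hx Hy.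
  destruct (cosh_gmean_le x y Hx Hy), (gmean_cosh_le_cosh_qmean x y Hx Hy),
    (cosh_qmean_le_amean x y Hx Hy).
  tauto.
- intros Rp x y HR Hx Hy; apply amean_cosh_le_cosh_Rmean; auto; lra.
- intros x y Hx Hy.
  destruct (sinhc_gmean_le x y Hx Hy), (gmean_sinhc_le_sinhc_qmean x y Hx Hy),
    (sinhc_qmean_le_amean x y Hx Hy).
  tauto.
- intros Rp x y HR Hx Hy; apply amean_sinhc_le_sinhc_Rmean; auto; lra.
Qed.
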